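(* Let $\mathbb{T}=(T,\eta,(\cdot)^\sharp)$ be a Kleene monad on a category $\mathbf{C}$. 1. If $\mathbf{C}$ is cartesian closed and $S$ is an object of $\mathbf{C}$, then the state monad transform $T_S X=(T(X\times S))^S$ is a Kleene monad, where the Kleisli category of $T_S$ is identified with the full subcategory of the Kleisli category of $\mathbb{T}$ on the objects of the form $X\times S$ (via $\mathbf{C}(X,(T(Y\times S))^S)\cong\mathbf{C}(X\times S,T(Y\times S))$), and joins, $\bot$ and Kleene star are inherited from the Kleisli category of $\mathbb{T}$. 2. Suppose $\mathbf{C}$ has finite products, $\mathbb{T}$ is strong with strength $\tau_{X,Y}:X\times TY\to T(X\times Y)$, and $(M,\varepsilon:1\to M,\bullet:M\times M\to M)$ is a monoid object in $\mathbf{C}$. Suppose the strength respects the Kleene monad structure, i.e. for all $f,g:Y\to TY'$ and $k:Y\to TY$ and every object $X$: $\tau\circ(\mathrm{id}_X\times\bot)=\bot$, $\tau\circ(\mathrm{id}_X\times(f\lor g))=\tau\circ(\mathrm{id}_X\times f)\lor\tau\circ(\mathrm{id}_X\times g)$, and $\tau\circ(\mathrm{id}_X\times k^\ast)=(\tau\circ(\mathrm{id}_X\times k))^\ast$ (stars and joins taken in the Kleisli category of $\mathbb{T}$). Then the writer monad transform $T_M X=T(M\times X)$ is a Kleene monad, where: for $f:X\to T(M\times Y)$ one sets $f^\circ:M\times X\to T(M\times Y)$ to be the composite $M\times X\xrightarrow{\tau\circ(\mathrm{id}\times f)}T(M\times(M\times Y))\cong T((M\times M)\times Y)\xrightarrow{T(\bullet\times\mathrm{id})}T(M\times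 Y)$; the unit of $T_M$ is $\eta\circ\langle\varepsilon\circ !,\mathrm{id}\rangle$; the Kleisli composite of $f:X\to T(M\times Y)$ followed by $g:Y\to T(M\times Z)$ is $(g^\circ)^\sharp\circ f$; joins and $\bot$ on $\mathbf{C}(X,T(M\times Y))$ are those of the Kleisli category of $\mathbb{T}$; and the Kleene star of $f:X\to T(M\times X)$ is $(f^\circ)^\ast\circ\eta\circ\langle\varepsilon\circ !,\mathrm{id}\rangle$ (star taken in the Kleisli category of $\mathbb{T}$).
   Context: Monads are given as Kleisli triples $(T,\eta,(\cdot)^\sharp)$ where $f:X\to TY$ is sent to $f^\sharp:TX\to TY$; the Kleisli category has morphisms $X\to TY$, identity $\eta$, and composition $g\cdot f=g^\sharp\circ f$. A Kleene-Kozen category is a category whose hom-sets are join-semilattices with least element $\bot$, with composition preserving binary joins and $\bot$ in each argument, together with an operator $(\cdot)^\ast:\mathbf{C}(X,X)\to\mathbf{C}(X,X)$ such that for all $f:Y\to Y$, $g:Y\to Z$, $h:X\to Y$: $g\circ f^\ast$ is the least prefixpoint of $x\mapsto g\lor x\circ f$ and $f^\ast\circ h$ is the least prefixpoint of $x\mapsto h\lor f\circ x$ (order: $f\le g\iff f\lor g=g$). A monad $\mathbb{T}$ is a Kleene monad if its Kleisli category is a Kleene-Kozen category. The terminal morphism is denoted $!$, pairing by $\langle\cdot,\cdot\rangle$. *)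

Set Implicit Arguments.
Unset Strict Implicit.

Record Category := {
  Ob :> Type;
  Hom : Ob -> Ob -> Type;
  idm : forall X, Hom X X;
  comp : forall X Y Z, Hom Y Z -> Hom X Y -> Hom X Z;
  comp_id_l : forall X Y (f : Hom X Y), comp (idm Y) f = f;
  comp_id_r : forall X Y (f : Hom X Y), comp f (idm X) = f;
  comp_assoc : forall X Y Z W (f : Hom X Y) (g : Hom Y Z) (h : Hom Z W),
      comp h (comp g f) = comp (comp h g) f }.
Arguments Hom {C} X Y : rename.
Arguments idm {C} X : rename.
Arguments comp {C X Y Z} g f : rename.

Record KTriple (C : Category) := {
  T : C -> C;
  eta : forall X, Hom X (T X);
  sharp : forall X Y, Hom X (T Y) -> Hom (T X) (T Y) }.
Arguments T {C} k X : rename.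
Arguments eta {C} k X : rename.
Arguments sharp {C} k {X Y} f : rename.

Definition is_monad (C : Category) (M : KTriple C) : Prop :=
  (forall X, sharp M (eta M X) = idm (T M X)) /\
  (forall X Y (f : Hom X (T M Y)), comp (sharp M f) (eta M X) = f) /\
  (forall X Y Z (f : Hom X (T M Y)) (g : Hom Y (T M Z)),
      comp (sharp M g) (sharp M f) = sharp M (comp (sharp M g) f)).

Definition KHom (C : Category) (M : KTriple C) (X Y : C) := Hom X (T M Y).
Definition kcomp (C : Category) (M : KTriple C) (X Y Z : C)
  (g : KHom M Y Z) (f : KHom M X Y) : KHom M X Z := comp (sharp M g) f.

Section KK.
Variables (O : Type) (H : O -> O -> Type)
  (cmp : forall X Y Z, H Y Z -> H X Y -> H X Z)
  (join : forall X Y, H X Y -> H X Y -> H X Y)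
  (bot : forall X Y, H X Y)
  (star : forall X, H X X -> H X X).

Definition kle X Y (f g : H X Y) : Prop := join f g = g.

Definition least_prefixpoint X Y (F : H X Y -> H X Y) (a : H X Y) : Prop :=
  kle (F a) a /\ forall x, kle (F x) x -> kle a x.

Record is_KleeneKozen : Prop := {
  kk_join_assoc : forall X Y (f g h : H X Y), join f (join g h) = join (join f g) h;
  kk_join_comm : forall X Y (f g : H X Y), join f g = join g f;
  kk_join_idem : forall X Y (f : H X Y), join f f = f;
  kk_join_bot : forall X Y (f : H X Y), join (bot X Y) f = f;
  kk_comp_join_r : forall X Y Z (g : H Y Z) (f1 f2 : H X Y),
      cmp g (join f1 f2) = join (cmp g f1) (cmp g f2);
  kk_comp_join_l : forall X Y Z (g1 g2 : H Y Z) (f : H X Y),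
      cmp (join g1 g2) f = join (cmp g1 f) (cmp g2 f);
  kk_comp_bot_r : forall X Y Z (g : H Y Z), cmp g (bot X Y) = bot X Z;
  kk_comp_bot_l : forall X Y Z (f : H X Y), cmp (bot Y Z) f = bot X Z;
  kk_star_r : forall Y Z (f : H Y Y) (g : H Y Z),
      least_prefixpoint (fun x => join g (cmp x f)) (cmp g (star f));
  kk_star_l : forall X Y (f : H Y Y) (h : H X Y),
      least_prefixpoint (fun x => join h (cmp f x)) (cmp (star f) h) }.
End KK.

Definition is_KleeneMonad (C : Category) (M : KTriple C)
  (join : forall X Y, KHom M X Y -> KHom M X Y -> KHom M X Y)
  (bot : forall X Y, KHom M X Y)
  (star : forall X, KHom M X X -> KHom M X X) : Prop :=
  is_monad M /\ is_KleeneKozen (@kcomp C M) join bot star.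

Record Terminal (C : Category) := {
  one : C;
  bang : forall X, Hom X one;
  bang_uniq : forall X (f : Hom X one), f = bang X }.
Arguments one {C} t : rename.
Arguments bang {C} t X : rename.

Record Products (C : Category) := {
  prod : C -> C -> C;
  p1 : forall X Y, Hom (prod X Y) X;
  p2 : forall X Y, Hom (prod X Y) Y;
  pair : forall Z X Y, Hom Z X -> Hom Z Y -> Hom Z (prod X Y);
  pair_p1 : forall Z X Y (f : Hom Z X) (g : Hom Z Y), comp (p1 X Y) (pair f g) = f;
  pair_p2 : forall Z X Y (f : Hom Z X) (g : Hom Z Y), comp (p2 X Y) (pair f g) = g;
  pair_uniq : forall Z X Y (h : Hom Z (prod X Y)),
      pair (comp (p1 X Y) h) (comp (p2 X Y) h) = h }.
Arguments prod {C} p X Y : rename.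
Arguments p1 {C} p {X Y} : rename.
Arguments p2 {C} p {X Y} : rename.
Arguments pair {C} p {Z X Y} f g : rename.

Definition fprod (C : Category) (P : Products C) (X Y X' Y' : C)
  (f : Hom X X') (g : Hom Y Y') : Hom (prod P X Y) (prod P X' Y') :=
  pair P (comp f (p1 P)) (comp g (p2 P)).
Arguments fprod {C} P {X Y X' Y'} f g.

Definition assocr (C : Category) (P : Products C) (X Y Z : C)
  : Hom (prod P (prod P X Y) Z) (prod P X (prod P Y Z)) :=
  pair P (comp (p1 P) (p1 P)) (pair P (comp (p2 P) (p1 P)) (p2 P)).
Definition assocl (C : Category) (P : Products C) (X Y Z : C)
  : Hom (prod P X (prod P Y Z)) (prod P (prod P X Y) Z) :=
  pair P (pair P (p1 P) (comp (p1 P) (p2 P))) (comp (p2 P) (p2 P)).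
Arguments assocr {C} P {X Y Z}.
Arguments assocl {C} P {X Y Z}.

(* exponentials: expo B A = B^A *)
Record Exponentials (C : Category) (P : Products C) := {
  expo : C -> C -> C;
  ev : forall A B, Hom (prod P (expo B A) A) B;
  curry : forall Z A B, Hom (prod P Z A) B -> Hom Z (expo B A);
  curry_ev : forall Z A B (f : Hom (prod P Z A) B),
      comp (ev A B) (fprod P (curry f) (idm A)) = f;
  curry_uniq : forall Z A B (g : Hom Z (expo B A)),
      curry (comp (ev A B) (fprod P g (idm A))) = g }.
Arguments expo {C P} e B A : rename.
Arguments ev {C P} e {A B} : rename.
Arguments curry {C P} e {Z A B} f : rename.

Definition uncurry (C : Category) (P : Products C) (E : Exponentials P)
  (X A B : C) (f : Hom X (expo E B A)) : Hom (prod P X A) B :=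
  comp (ev E) (fprod P f (idm A)).
Arguments uncurry {C P} E {X A B} f.

Section State.
Variables (C : Category) (P : Products C) (E : Exponentials P)
  (M : KTriple C) (S : C).

Definition state_triple : KTriple C := {|
  T := fun X => expo E (T M (prod P X S)) S;
  eta := fun X => curry E (eta M (prod P X S));
  sharp := fun X Y f => curry E (comp (sharp M (uncurry E f)) (ev E)) |}.

Variables (join : forall X Y, KHom M X Y -> KHom M X Y -> KHom M X Y)
  (bot : forall X Y, KHom M X Y)
  (star : forall X, KHom M X X -> KHom M X X).

Definition state_join X Y (f g : KHom state_triple X Y) : KHom state_triple X Y :=
  curry E (join (uncurry E f) (uncurry E g)).
Definition state_bot X Y : KHom state_triple X Y :=
  curry E (bot (prod P X S) (prod P Y S)).
Definition state_star X (f : KHom state_triple X X) : KHom state_triple X X :=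
  curry E (star (uncurry E f)).
End State.

Definition Tmap (C : Category) (M : KTriple C) (X Y : C) (h : Hom X Y)
  : Hom (T M X) (T M Y) := sharp M (comp (eta M Y) h).
Arguments Tmap {C} M {X Y} h.

Definition is_strength (C : Category) (One : Terminal C) (P : Products C)
  (M : KTriple C) (tau : forall X Y, Hom (prod P X (T M Y)) (T M (prod P X Y)))
  : Prop :=
  (forall X Y, comp (tau X Y) (fprod P (idm X) (eta M Y)) = eta M (prod P X Y)) /\
  (forall X Y Z (f : Hom Y (T M Z)),
     comp (tau X Z) (fprod P (idm X) (sharp M f))
     = comp (sharp M (comp (tau X Z) (fprod P (idm X) f))) (tau X Y)) /\
  (forall X X' Y (g : Hom X X'),
     comp (Tmap M (fprod P g (idm Y))) (tau X Y) = comp (tau X' Y) (fprod P g (idm (T M Y)))) /\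
  (forall Y, comp (Tmap M (p2 P)) (tau (one One) Y) = p2 P) /\
  (forall X Y Z,
     comp (Tmap M (assocr P)) (tau (prod P X Y) Z)
     = comp (tau X (prod P Y Z)) (comp (fprod P (idm X) (tau Y Z)) (assocr P))).

Definition is_monoid (C : Category) (One : Terminal C) (P : Products C)
  (Mo : C) (e : Hom (one One) Mo) (mu : Hom (prod P Mo Mo) Mo) : Prop :=
  comp mu (pair P (comp e (bang One Mo)) (idm Mo)) = idm Mo /\
  comp mu (pair P (idm Mo) (comp e (bang One Mo))) = idm Mo /\
  comp mu (fprod P mu (idm Mo)) = comp mu (comp (fprod P (idm Mo) mu) (assocr P)).

Section Writer.
Variables (C : Category) (One : Terminal C) (P : Products C) (M : KTriple C)
  (tau : forall X Y, Hom (prod P X (T M Y)) (T M (prod P X Y)))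
  (Mo : C) (e : Hom (one One) Mo) (mu : Hom (prod P Mo Mo) Mo).

Definition wcirc (X Y : C) (f : Hom X (T M (prod P Mo Y)))
  : Hom (prod P Mo X) (T M (prod P Mo Y)) :=
  comp (Tmap M (fprod P mu (idm Y)))
    (comp (Tmap M (assocl P)) (comp (tau Mo (prod P Mo Y)) (fprod P (idm Mo) f))).

Definition writer_eta (X : C) : Hom X (T M (prod P Mo X)) :=
  comp (eta M (prod P Mo X)) (pair P (comp e (bang One X)) (idm X)).

Definition writer_triple : KTriple C := {|
  T := fun X => T M (prod P Mo X);
  eta := writer_eta;
  sharp := fun X Y f => sharp M (wcirc f) |}.

Variables (join : forall X Y, KHom M X Y -> KHom M X Y -> KHom M X Y)
  (bot : forall X Y, KHom M X Y)
  (star : forall X, KHom M X X -> KHom M X X).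

Definition writer_join X Y (f g : KHom writer_triple X Y) : KHom writer_triple X Y :=
  join f g.
Definition writer_bot X Y : KHom writer_triple X Y := bot X (prod P Mo Y).
Definition writer_star X (f : KHom writer_triple X X) : KHom writer_triple X X :=
  kcomp (star (wcirc f)) (writer_eta X).
End Writer.

Set Implicit Arguments.
Unset Strict Implicit.

(* Both transforms are Kleene monads for the same reason: a Kleene-Kozen
   structure pulls back along any injective map of hom-sets that preserves
   composition, joins, bottom and star.  For the state monad this map is
   uncurrying, which identifies the Kleisli category of T_S with the full
   subcategory of the Kleisli category of T on the objects X x S.  For the
   writer monad it is f |-> f°, which is injective since
   f° o <e o !, id> = f.  It preserves composition because every g° is
   M-equivariant (it commutes with the action of M by multiplication on the
   left), and it preserves the star because the strength commutes with star
   and, in any Kleene-Kozen category, p . b = a . p implies p . b* = a* . p,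
   so equivariance is inherited by stars. *)

Section ProductLemmas.
Variables (C : Category) (P : Products C).

Lemma pair_comp (Z Z' X Y : C) (f : Hom Z X) (g : Hom Z Y) (h : Hom Z' Z) :
  comp (pair P f g) h = pair P (comp f h) (comp g h).
Proof.
  rewrite <- (pair_uniq (comp (pair P f g) h)).
  rewrite !comp_assoc, pair_p1, pair_p2. reflexivity.
Qed.

Lemma pair_ext (Z X Y : C) (a b : Hom Z (prod P X Y)) :
  comp (p1 P) a = comp (p1 P) b -> comp (p2 P) a = comp (p2 P) b -> a = b.
Proof.
  intros H1 H2. rewrite <- (pair_uniq a), <- (pair_uniq b), H1, H2. reflexivity.
Qed.

End ProductLemmas.

Lemma bang_comp (C : Category) (One : Terminal C) (X Y : C) (h : Hom X Y) :
  comp (bang One Y) h = bang One X.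
Proof. apply bang_uniq. Qed.

Ltac pair_simpl :=
  repeat progress (rewrite ?comp_id_l, ?comp_id_r, <- ?comp_assoc,
                     ?pair_comp, ?pair_p1, ?pair_p2, ?bang_comp).

Lemma fprod_comp (C : Category) (P : Products C) (X X' X'' Y Y' Y'' : C)
  (a : Hom X' X'') (b : Hom X X') (c : Hom Y' Y'') (d : Hom Y Y') :
  fprod P (comp a b) (comp c d) = comp (fprod P a c) (fprod P b d).
Proof. unfold fprod. apply pair_ext; pair_simpl; reflexivity. Qed.

Lemma fprod_id (C : Category) (P : Products C) (X Y : C) :
  fprod P (idm X) (idm Y) = idm (prod P X Y).
Proof. unfold fprod. apply pair_ext; pair_simpl; reflexivity. Qed.

Lemma fprod_id_comp (C : Category) (P : Products C) (X Y Y' Y'' : C)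
  (a : Hom Y' Y'') (b : Hom Y Y') :
  fprod P (idm X) (comp a b) = comp (fprod P (idm X) a) (fprod P (idm X) b).
Proof. rewrite <- fprod_comp, comp_id_l. reflexivity. Qed.

Section KleeneKozenOrder.
Variables (O : Type) (H : O -> O -> Type)
  (cmp : forall X Y Z, H Y Z -> H X Y -> H X Z)
  (join : forall X Y, H X Y -> H X Y -> H X Y)
  (bot : forall X Y, H X Y)
  (star : forall X, H X X -> H X X).
Hypothesis KK : is_KleeneKozen cmp join bot star.

Lemma kle_refl X Y (f : H X Y) : kle join f f.
Proof. apply (kk_join_idem KK). Qed.

Lemma kle_trans X Y (f g h : H X Y) : kle join f g -> kle join g h -> kle join f h.
Proof. unfold kle; intros Hfg Hgh. rewrite <- Hgh, (kk_join_assoc KK), Hfg. reflexivity. Qed.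

Lemma kle_antisym X Y (f g : H X Y) : kle join f g -> kle join g f -> f = g.
Proof.
  unfold kle; intros Hfg Hgf. rewrite <- Hfg, (kk_join_comm KK). symmetry. exact Hgf.
Qed.

Lemma kle_comp_l X Y Z (g : H Y Z) (f f' : H X Y) :
  kle join f f' -> kle join (cmp g f) (cmp g f').
Proof. unfold kle; intros Hf. rewrite <- (kk_comp_join_r KK), Hf. reflexivity. Qed.

Lemma kle_comp_r X Y Z (g g' : H Y Z) (f : H X Y) :
  kle join g g' -> kle join (cmp g f) (cmp g' f).
Proof. unfold kle; intros Hg. rewrite <- (kk_comp_join_l KK), Hg. reflexivity. Qed.

Variable id : forall X, H X X.
Hypothesis cmp_id_l : forall X Y (f : H X Y), cmp (id Y) f = f.
Hypothesis cmp_id_r : forall X Y (f : H X Y), cmp f (id X) = f.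
Hypothesis cmp_assoc : forall X Y Z W (f : H X Y) (g : H Y Z) (h : H Z W),
  cmp h (cmp g f) = cmp (cmp h g) f.

Lemma star_unfold_l X (f : H X X) : kle join (join (id X) (cmp f (star f))) (star f).
Proof. destruct (kk_star_l KK f (id X)) as [Hpre _]. rewrite cmp_id_r in Hpre. exact Hpre. Qed.

Lemma star_unfold_r X (f : H X X) : kle join (join (id X) (cmp (star f) f)) (star f).
Proof. destruct (kk_star_r KK f (id X)) as [Hpre _]. rewrite cmp_id_l in Hpre. exact Hpre. Qed.

Lemma star_commute A B (p : H A B) (a : H B B) (b : H A A) :
  cmp p b = cmp a p -> cmp p (star b) = cmp (star a) p.
Proof.
  intros Hpab. apply kle_antisym.
  - apply (proj2 (kk_star_r KK b p)).
    rewrite <- cmp_assoc, Hpab, cmp_assoc.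
    eapply kle_trans; [| apply kle_comp_r, star_unfold_r].
    rewrite (kk_comp_join_l KK), cmp_id_l. apply kle_refl.
  - apply (proj2 (kk_star_l KK a p)).
    rewrite cmp_assoc, <- Hpab, <- cmp_assoc.
    eapply kle_trans; [| apply kle_comp_l, star_unfold_l].
    rewrite (kk_comp_join_r KK), cmp_id_r. apply kle_refl.
Qed.

End KleeneKozenOrder.

Section KleeneKozenTransfer.
Variables (O : Type) (H : O -> O -> Type)
  (cmp : forall X Y Z, H Y Z -> H X Y -> H X Z)
  (join : forall X Y, H X Y -> H X Y -> H X Y)
  (bot : forall X Y, H X Y)
  (star : forall X, H X X -> H X X).
Hypothesis KK : is_KleeneKozen cmp join bot star.
Variables (O' : Type) (H' : O' -> O' -> Type)
  (cmp' : forall X Y Z, H' Y Z -> H' X Y -> H' X Z)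
  (join' : forall X Y, H' X Y -> H' X Y -> H' X Y)
  (bot' : forall X Y, H' X Y)
  (star' : forall X, H' X X -> H' X X).
Variables (F : O' -> O) (U : forall X Y, H' X Y -> H (F X) (F Y)).
Hypothesis U_inj : forall X Y (f g : H' X Y), U f = U g -> f = g.
Hypothesis U_cmp : forall X Y Z (g : H' Y Z) (f : H' X Y), U (cmp' g f) = cmp (U g) (U f).
Hypothesis U_join : forall X Y (f g : H' X Y), U (join' f g) = join (U f) (U g).
Hypothesis U_bot : forall X Y, U (bot' X Y) = bot (F X) (F Y).
Hypothesis U_star : forall X (f : H' X X), U (star' f) = star (U f).

Lemma kle_transfer X Y (f g : H' X Y) : kle join' f g <-> kle join (U f) (U g).
Proof.
  unfold kle. split; intros Hfg.
  - rewrite <- U_join, Hfg. reflexivity.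
  - apply U_inj. rewrite U_join. exact Hfg.
Qed.

Lemma least_prefixpoint_transfer X Y (G' : H' X Y -> H' X Y)
  (G : H (F X) (F Y) -> H (F X) (F Y)) (a : H' X Y) :
  (forall x, U (G' x) = G (U x)) ->
  least_prefixpoint join G (U a) -> least_prefixpoint join' G' a.
Proof.
  intros HG [Hpre Hleast]. split.
  - apply kle_transfer. rewrite HG. exact Hpre.
  - intros x Hx. apply kle_transfer, Hleast. rewrite <- HG. apply kle_transfer, Hx.
Qed.

Lemma is_KleeneKozen_transfer : is_KleeneKozen cmp' join' bot' star'.
Proof.
  constructor; intros; try (apply U_inj; rewrite ?U_cmp, ?U_join, ?U_bot, ?U_cmp).
  - apply (kk_join_assoc KK).
  - apply (kk_join_comm KK).
  - apply (kk_join_idem KK).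
  - apply (kk_join_bot KK).
  - apply (kk_comp_join_r KK).
  - apply (kk_comp_join_l KK).
  - apply (kk_comp_bot_r KK).
  - apply (kk_comp_bot_l KK).
  - apply least_prefixpoint_transfer with (G := fun x => join (U g) (cmp x (U f))).
    + intros x. rewrite U_join, U_cmp. reflexivity.
    + rewrite U_cmp, U_star. apply (kk_star_r KK).
  - apply least_prefixpoint_transfer with (G := fun x => join (U h) (cmp (U f) x)).
    + intros x. rewrite U_join, U_cmp. reflexivity.
    + rewrite U_cmp, U_star. apply (kk_star_l KK).
Qed.

End KleeneKozenTransfer.

Section KleisliLemmas.
Variables (C : Category) (M : KTriple C).
Hypothesis HM : is_monad M.

Lemma sharp_eta X : sharp M (eta M X) = idm (T M X).
Proof. apply (proj1 HM). Qed.

Lemma sharp_comp_eta X Y (f : Hom X (T M Y)) : comp (sharp M f) (eta M X) = f.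
Proof. apply (proj1 (proj2 HM)). Qed.

Lemma sharp_comp_sharp X Y Z (f : Hom X (T M Y)) (g : Hom Y (T M Z)) :
  comp (sharp M g) (sharp M f) = sharp M (comp (sharp M g) f).
Proof. apply (proj2 (proj2 HM)). Qed.

Lemma kcomp_eta_l X Y (f : KHom M X Y) : kcomp (eta M Y) f = f.
Proof. unfold kcomp. rewrite sharp_eta. apply comp_id_l. Qed.

Lemma kcomp_eta_r X Y (f : KHom M X Y) : kcomp f (eta M X) = f.
Proof. apply sharp_comp_eta. Qed.

Lemma kcomp_assoc X Y Z W (f : KHom M X Y) (g : KHom M Y Z) (h : KHom M Z W) :
  kcomp h (kcomp g f) = kcomp (kcomp h g) f.
Proof. unfold kcomp. rewrite comp_assoc, sharp_comp_sharp. reflexivity. Qed.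

Lemma kcomp_eta_comp X Y Z (g : KHom M Y Z) (h : Hom X Y) :
  kcomp g (comp (eta M Y) h) = comp g h.
Proof. unfold kcomp. rewrite comp_assoc, sharp_comp_eta. reflexivity. Qed.

Lemma comp_kcomp X Y Z W (g : KHom M Y Z) (f : KHom M X Y) (h : Hom W X) :
  comp (kcomp g f) h = kcomp g (comp f h).
Proof. unfold kcomp. symmetry. apply comp_assoc. Qed.

Lemma kcomp_eta_comp2 X Y Z W (a : Hom Y Z) (b : Hom X Y) (f : KHom M W X) :
  kcomp (comp (eta M Z) a) (kcomp (comp (eta M Y) b) f)
  = kcomp (comp (eta M Z) (comp a b)) f.
Proof. rewrite kcomp_assoc, kcomp_eta_comp, comp_assoc. reflexivity. Qed.

Lemma Tmap_comp X Y Z (a : Hom Y Z) (b : Hom X Y) :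
  comp (Tmap M a) (Tmap M b) = Tmap M (comp a b).
Proof.
  unfold Tmap. rewrite sharp_comp_sharp.
  change (comp (sharp M (comp (eta M Z) a)) (comp (eta M Y) b))
    with (kcomp (comp (eta M Z) a) (comp (eta M Y) b)).
  rewrite kcomp_eta_comp, comp_assoc. reflexivity.
Qed.

Lemma comp_Tmap X Y Z (h : Hom Y Z) (x : Hom X (T M Y)) :
  comp (Tmap M h) x = kcomp (comp (eta M Z) h) x.
Proof. reflexivity. Qed.

Lemma Tmap_id X : Tmap M (idm X) = idm (T M X).
Proof. unfold Tmap. rewrite comp_id_r. apply sharp_eta. Qed.

End KleisliLemmas.

Section StateTransform.
Variables (C : Category) (P : Products C) (E : Exponentials P) (M : KTriple C) (S : C).
Variables (join : forall X Y, KHom M X Y -> KHom M X Y -> KHom M X Y)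
  (bot : forall X Y, KHom M X Y)
  (star : forall X, KHom M X X -> KHom M X X).

Notation ST := (state_triple E M S).

Lemma uncurry_curry (X A B : C) (f : Hom (prod P X A) B) : uncurry E (curry E f) = f.
Proof. apply curry_ev. Qed.

Lemma uncurry_inj (X A B : C) (f g : Hom X (expo E B A)) :
  uncurry E f = uncurry E g -> f = g.
Proof. intros Hfg. rewrite <- (curry_uniq f), <- (curry_uniq g). exact (f_equal _ Hfg). Qed.

Lemma uncurry_comp (X Y A B : C) (g : Hom Y (expo E B A)) (f : Hom X Y) :
  uncurry E (comp g f) = comp (uncurry E g) (fprod P f (idm A)).
Proof.
  unfold uncurry. rewrite <- comp_assoc, <- fprod_comp, comp_id_l. reflexivity.
Qed.

Lemma uncurry_state_eta X : uncurry E (eta ST X) = eta M (prod P X S).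
Proof. apply uncurry_curry. Qed.

Lemma uncurry_state_sharp X Y (f : KHom ST X Y) :
  uncurry E (sharp ST f) = comp (sharp M (uncurry E f)) (ev E).
Proof. apply uncurry_curry. Qed.

Lemma uncurry_state_kcomp X Y Z (g : KHom ST Y Z) (f : KHom ST X Y) :
  uncurry E (kcomp g f) = kcomp (uncurry E g) (uncurry E f).
Proof.
  unfold kcomp. rewrite uncurry_comp, uncurry_state_sharp, <- comp_assoc. reflexivity.
Qed.

Lemma state_monad : is_monad M -> is_monad ST.
Proof.
  intros HM. split; [|split].
  - intros X. apply uncurry_inj.
    rewrite uncurry_state_sharp, uncurry_state_eta, sharp_eta, comp_id_l; [|exact HM].
    unfold uncurry. rewrite fprod_id, comp_id_r. reflexivity.
  - intros X Y f. apply uncurry_inj.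
    change (uncurry E (kcomp f (eta ST X)) = uncurry E f).
    rewrite uncurry_state_kcomp, uncurry_state_eta. apply kcomp_eta_r, HM.
  - intros X Y Z f g. apply uncurry_inj.
    rewrite uncurry_comp, !uncurry_state_sharp, <- comp_assoc.
    change (comp (ev E) (fprod P (sharp ST f) (idm S))) with (uncurry E (sharp ST f)).
    rewrite uncurry_state_sharp, comp_assoc, sharp_comp_sharp; [|exact HM].
    exact (f_equal (fun h => comp (sharp M h) (ev E)) (eq_sym (uncurry_state_kcomp g f))).
Qed.

Lemma state_kleene_monad :
  is_KleeneMonad join bot star ->
  is_KleeneMonad (M := ST) (state_join join) (state_bot E S bot) (state_star star).
Proof.
  intros [HM KK]. split; [exact (state_monad HM)|].
  apply (is_KleeneKozen_transfer KK (F := fun X => prod P X S)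
           (U := fun X Y (f : KHom ST X Y) => uncurry E f)).
  - intros X Y. apply uncurry_inj.
  - intros X Y Z. apply uncurry_state_kcomp.
  - intros X Y f g. apply uncurry_curry.
  - intros X Y. apply uncurry_curry.
  - intros X f. apply uncurry_curry.
Qed.

End StateTransform.

Section WriterTransform.
Variables (C : Category) (One : Terminal C) (P : Products C) (M : KTriple C)
  (tau : forall X Y, Hom (prod P X (T M Y)) (T M (prod P X Y)))
  (Mo : C) (e : Hom (one One) Mo) (mu : Hom (prod P Mo Mo) Mo).
Hypothesis HM : is_monad M.
Hypothesis Hst : is_strength One tau.
Hypothesis Hmo : is_monoid e mu.

Lemma strength_eta X A : comp (tau X A) (fprod P (idm X) (eta M A)) = eta M (prod P X A).
Proof. apply (proj1 Hst). Qed.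

Lemma strength_sharp X Y Z (f : Hom Y (T M Z)) :
  comp (tau X Z) (fprod P (idm X) (sharp M f))
  = comp (sharp M (comp (tau X Z) (fprod P (idm X) f))) (tau X Y).
Proof. apply (proj1 (proj2 Hst)). Qed.

Lemma strength_nat X X' Y (g : Hom X X') :
  comp (tau X' Y) (fprod P g (idm (T M Y))) = comp (Tmap M (fprod P g (idm Y))) (tau X Y).
Proof. symmetry. apply (proj1 (proj2 (proj2 Hst))). Qed.

Lemma mu_unit_l Z (x : Hom Z Mo) : comp mu (pair P (comp e (bang One Z)) x) = x.
Proof.
  transitivity (comp (comp mu (pair P (comp e (bang One Mo)) (idm Mo))) x).
  - pair_simpl. reflexivity.
  - rewrite (proj1 Hmo). apply comp_id_l.
Qed.

Lemma mu_unit_r Z (x : Hom Z Mo) : comp mu (pair P x (comp e (bang One Z))) = x.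
Proof.
  transitivity (comp (comp mu (pair P (idm Mo) (comp e (bang One Mo)))) x).
  - pair_simpl. reflexivity.
  - rewrite (proj1 (proj2 Hmo)). apply comp_id_l.
Qed.

Lemma mu_assoc Z (a b c : Hom Z Mo) :
  comp mu (pair P (comp mu (pair P a b)) c) = comp mu (pair P a (comp mu (pair P b c))).
Proof.
  pose proof (f_equal (fun h => comp h (pair P (pair P a b) c)) (proj2 (proj2 Hmo))) as Hassoc.
  simpl in Hassoc. unfold fprod, assocr in Hassoc.
  repeat progress (rewrite ?comp_id_l, ?comp_id_r, <- ?comp_assoc,
                     ?pair_comp, ?pair_p1, ?pair_p2 in Hassoc).
  exact Hassoc.
Qed.

Ltac monoid_crush := pair_simpl; rewrite ?mu_unit_r, ?mu_unit_l, ?mu_assoc; pair_simpl;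
  first [ reflexivity
        | (etransitivity; [apply bang_uniq | symmetry; apply bang_uniq])
        | (apply pair_ext; monoid_crush) ].

Lemma strength_one Y : tau (one One) Y = comp (Tmap M (pair P (bang One Y) (idm Y))) (p2 P).
Proof.
  assert (Hinv : comp (pair P (bang One Y) (idm Y)) (p2 P) = idm (prod P (one One) Y))
    by monoid_crush.
  rewrite <- (proj1 (proj2 (proj2 (proj2 Hst))) Y).
  rewrite comp_assoc, Tmap_comp, Hinv, Tmap_id, comp_id_l; [reflexivity | exact HM ..].
Qed.

Lemma strength_assoc X Y B : tau (prod P X Y) B =
  comp (Tmap M (assocl P))
    (comp (tau X (prod P Y B)) (comp (fprod P (idm X) (tau Y B)) (assocr P))).
Proof.
  assert (Hinv : comp (assocl P) (assocr P) = idm (prod P (prod P X Y) B))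
    by (unfold assocl, assocr; monoid_crush).
  rewrite <- (proj2 (proj2 (proj2 (proj2 Hst))) X Y B).
  rewrite comp_assoc, Tmap_comp, Hinv, Tmap_id, comp_id_l; [reflexivity | exact HM ..].
Qed.

Definition strong_lift X A B (f : KHom M A B) : KHom M (prod P X A) (prod P X B) :=
  comp (tau X B) (fprod P (idm X) f).

Lemma strong_lift_comp X A B D (f : KHom M B D) (h : Hom A B) :
  strong_lift X (comp f h) = comp (strong_lift X f) (fprod P (idm X) h).
Proof. unfold strong_lift. rewrite fprod_id_comp, comp_assoc. reflexivity. Qed.

Lemma strong_lift_eta_comp X A B (h : Hom A B) :
  strong_lift X (comp (eta M B) h) = comp (eta M (prod P X B)) (fprod P (idm X) h).
Proof. rewrite strong_lift_comp. unfold strong_lift. rewrite strength_eta. reflexivity. Qed.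

Lemma strong_lift_kcomp X A B D (g : KHom M B D) (f : KHom M A B) :
  strong_lift X (kcomp g f) = kcomp (strong_lift X g) (strong_lift X f).
Proof.
  unfold strong_lift, kcomp.
  rewrite fprod_id_comp, comp_assoc, strength_sharp, <- comp_assoc. reflexivity.
Qed.

Definition mact Y : Hom (prod P Mo (prod P Mo Y)) (prod P Mo Y) :=
  comp (fprod P mu (idm Y)) (assocl P).

Definition unit_pair X : Hom X (prod P Mo X) := pair P (comp e (bang One X)) (idm X).

Lemma mact_unit_l Y :
  comp (mact Y) (comp (fprod P e (idm (prod P Mo Y))) (pair P (bang One _) (idm _)))
  = idm (prod P Mo Y).
Proof. unfold mact, fprod, assocl. monoid_crush. Qed.

Lemma mact_unit_r Y : comp (mact Y) (fprod P (idm Mo) (unit_pair Y)) = idm (prod P Mo Y).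
Proof. unfold mact, unit_pair, fprod, assocl. monoid_crush. Qed.

Lemma mact_assoc Y : comp (mact Y) (fprod P (idm Mo) (mact Y)) = comp (mact Y) (mact (prod P Mo Y)).
Proof. unfold mact, fprod, assocl. monoid_crush. Qed.

Lemma wcirc_as_kcomp X Y (f : Hom X (T M (prod P Mo Y))) :
  wcirc tau mu f = kcomp (comp (eta M _) (mact Y)) (strong_lift Mo f).
Proof.
  unfold wcirc, mact. rewrite <- (kcomp_eta_comp2 HM (fprod P mu (idm Y)) (assocl P)).
  reflexivity.
Qed.

Lemma wcirc_unit_pair X Y (f : Hom X (T M (prod P Mo Y))) :
  comp (wcirc tau mu f) (unit_pair X) = f.
Proof.
  rewrite wcirc_as_kcomp, comp_kcomp. unfold strong_lift, unit_pair.
  assert (Hsplit : comp (comp (tau Mo (prod P Mo Y)) (fprod P (idm Mo) f))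
                     (pair P (comp e (bang One X)) (idm X))
                   = comp (comp (tau Mo (prod P Mo Y)) (fprod P e (idm (T M (prod P Mo Y)))))
                       (pair P (bang One X) f)).
  { unfold fprod. rewrite <- !comp_assoc. f_equal. pair_simpl. reflexivity. }
  rewrite Hsplit, strength_nat, strength_one, comp_assoc, Tmap_comp, <- comp_assoc, pair_p2;
    [|exact HM].
  rewrite comp_Tmap, (kcomp_eta_comp2 HM), mact_unit_l, comp_id_r. apply kcomp_eta_l, HM.
Qed.

Lemma writer_eta_unit_pair X : writer_eta P M e X = comp (eta M (prod P Mo X)) (unit_pair X).
Proof. reflexivity. Qed.

(* In elements: [a (m * n, y) = m * a (n, y)], where [m] multiplies the monoid
   component of the monadic result. *)
Definition equivariant Y Y' (a : KHom M (prod P Mo Y) (prod P Mo Y')) : Prop :=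
  kcomp (comp (eta M _) (mact Y')) (strong_lift Mo a) = comp a (mact Y).

Lemma strong_lift_mact Y Z (g : Hom Y (T M (prod P Mo Z))) :
  comp (strong_lift Mo g) (mact Y)
  = kcomp (comp (eta M _) (mact (prod P Mo Z))) (strong_lift Mo (strong_lift Mo g)).
Proof.
  assert (Hswap : comp (fprod P (idm Mo) g) (comp (fprod P mu (idm Y)) (assocl P))
                  = comp (fprod P mu (idm _)) (comp (fprod P (idm (prod P Mo Mo)) g) (assocl P)))
    by (unfold fprod, assocl; monoid_crush).
  assert (Hreassoc : comp (assocr P) (comp (fprod P (idm (prod P Mo Mo)) g) (assocl P))
                     = fprod P (idm Mo) (fprod P (idm Mo) g))
    by (unfold fprod, assocl, assocr; monoid_crush).
  unfold strong_lift at 1, mact at 1.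
  rewrite <- comp_assoc, Hswap, comp_assoc, strength_nat, strength_assoc, <- !comp_assoc.
  rewrite Hreassoc, <- fprod_id_comp, !comp_Tmap, (kcomp_eta_comp2 HM). reflexivity.
Qed.

Lemma wcirc_equivariant Y Z (g : Hom Y (T M (prod P Mo Z))) : equivariant (wcirc tau mu g).
Proof.
  unfold equivariant. rewrite !wcirc_as_kcomp, strong_lift_kcomp, strong_lift_eta_comp.
  rewrite (kcomp_eta_comp2 HM), comp_kcomp, strong_lift_mact, (kcomp_eta_comp2 HM), mact_assoc.
  reflexivity.
Qed.

Lemma wcirc_kcomp X Y Z (g : Hom Y (T M (prod P Mo Z))) (f : Hom X (T M (prod P Mo Y))) :
  wcirc tau mu (kcomp (wcirc tau mu g) f) = kcomp (wcirc tau mu g) (wcirc tau mu f).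
Proof.
  rewrite (wcirc_as_kcomp (kcomp _ f)), strong_lift_kcomp, (kcomp_assoc HM).
  rewrite (wcirc_equivariant g), (wcirc_as_kcomp f), (kcomp_assoc HM), (kcomp_eta_comp HM).
  reflexivity.
Qed.

Lemma equivariant_wcirc_unit_pair Y Y' (a : KHom M (prod P Mo Y) (prod P Mo Y')) :
  equivariant a -> wcirc tau mu (comp a (unit_pair Y)) = a.
Proof.
  intros Ha. rewrite wcirc_as_kcomp, strong_lift_comp, <- comp_kcomp, Ha, <- comp_assoc.
  rewrite mact_unit_r. apply comp_id_r.
Qed.

Lemma wcirc_writer_eta X : wcirc tau mu (writer_eta P M e X) = eta M (prod P Mo X).
Proof.
  rewrite writer_eta_unit_pair, wcirc_as_kcomp, strong_lift_eta_comp, (kcomp_eta_comp HM).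
  rewrite <- comp_assoc, mact_unit_r. apply comp_id_r.
Qed.

Notation WT := (writer_triple tau e mu).

Lemma writer_monad : is_monad WT.
Proof.
  split; [|split].
  - intros X. simpl. rewrite wcirc_writer_eta. apply sharp_eta, HM.
  - intros X Y f. simpl. rewrite writer_eta_unit_pair.
    change (kcomp (wcirc tau mu f) (comp (eta M _) (unit_pair X)) = f).
    rewrite (kcomp_eta_comp HM). apply wcirc_unit_pair.
  - intros X Y Z f g. simpl. rewrite (sharp_comp_sharp HM).
    exact (f_equal (sharp M) (eq_sym (wcirc_kcomp g f))).
Qed.

Variables (join : forall X Y, KHom M X Y -> KHom M X Y -> KHom M X Y)
  (bot : forall X Y, KHom M X Y)
  (star : forall X, KHom M X X -> KHom M X X).
Hypothesis KK : is_KleeneKozen (@kcomp C M) join bot star.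
Hypothesis strength_bot : forall X Y Y',
  comp (tau X Y') (fprod P (idm X) (bot Y Y')) = bot (prod P X Y) (prod P X Y').
Hypothesis strength_join : forall X Y Y' (f g : KHom M Y Y'),
  comp (tau X Y') (fprod P (idm X) (join f g))
  = join (comp (tau X Y') (fprod P (idm X) f)) (comp (tau X Y') (fprod P (idm X) g)).
Hypothesis strength_star : forall X Y (k : KHom M Y Y),
  comp (tau X Y) (fprod P (idm X) (star k)) = star (comp (tau X Y) (fprod P (idm X) k)).

Lemma equivariant_star Y (a : KHom M (prod P Mo Y) (prod P Mo Y)) :
  equivariant a -> equivariant (star a).
Proof.
  unfold equivariant. intros Ha.
  unfold strong_lift at 1. rewrite strength_star. fold (strong_lift Mo a).
  rewrite <- (kcomp_eta_comp HM (star a) (mact Y)).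
  apply (star_commute KK (kcomp_eta_l HM) (kcomp_eta_r HM) (kcomp_assoc HM)).
  rewrite (kcomp_eta_comp HM). exact Ha.
Qed.

Lemma wcirc_writer_star X (f : KHom WT X X) : wcirc tau mu (writer_star star f) = star (wcirc tau mu f).
Proof.
  unfold writer_star. rewrite writer_eta_unit_pair, (kcomp_eta_comp HM).
  apply equivariant_wcirc_unit_pair, equivariant_star, wcirc_equivariant.
Qed.

Lemma wcirc_join X Y (f g : Hom X (T M (prod P Mo Y))) :
  wcirc tau mu (join f g) = join (wcirc tau mu f) (wcirc tau mu g).
Proof.
  rewrite !wcirc_as_kcomp. unfold strong_lift. rewrite strength_join. apply (kk_comp_join_r KK).
Qed.

Lemma wcirc_bot X Y : wcirc tau mu (bot X (prod P Mo Y)) = bot (prod P Mo X) (prod P Mo Y).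
Proof.
  rewrite wcirc_as_kcomp. unfold strong_lift. rewrite strength_bot. apply (kk_comp_bot_r KK).
Qed.

Lemma writer_kleene_monad :
  is_KleeneMonad (M := WT) (writer_join join) (writer_bot tau e mu bot) (writer_star star).
Proof.
  split; [exact writer_monad|].
  apply (is_KleeneKozen_transfer KK (F := fun X => prod P Mo X)
           (U := fun X Y (f : KHom WT X Y) => wcirc tau mu f)).
  - intros X Y f g Hfg. rewrite <- (wcirc_unit_pair f), <- (wcirc_unit_pair g), Hfg.
    reflexivity.
  - intros X Y Z g f. apply wcirc_kcomp.
  - intros X Y f g. apply wcirc_join.
  - intros X Y. apply wcirc_bot.
  - intros X f. apply wcirc_writer_star.
Qed.

End WriterTransform.

Theorem proposition3 (C : Category) (M : KTriple C)
  (join : forall X Y, KHom M X Y -> KHom M X Y -> KHom M X Y)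
  (bot : forall X Y, KHom M X Y)
  (star : forall X, KHom M X X -> KHom M X X) :
  is_KleeneMonad join bot star ->
  (forall (One : Terminal C) (P : Products C) (E : Exponentials P) (S : C),
     @is_KleeneMonad C (@state_triple C P E M S)
       (@state_join C P E M S join) (@state_bot C P E M S bot)
       (@state_star C P E M S star)) /\
  (forall (One : Terminal C) (P : Products C)
     (tau : forall X Y, Hom (prod P X (T M Y)) (T M (prod P X Y)))
     (Mo : C) (e : Hom (one One) Mo) (mu : Hom (prod P Mo Mo) Mo),
     @is_strength C One P M tau ->
     @is_monoid C One P Mo e mu ->
     (forall X Y Y', comp (tau X Y') (fprod P (idm X) (bot Y Y')) = bot (prod P X Y) (prod P X Y')) ->
     (forall X Y Y' (f g : KHom M Y Y'),
        comp (tau X Y') (fprod P (idm X) (join Y Y' f g))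
        = join _ _ (comp (tau X Y') (fprod P (idm X) f)) (comp (tau X Y') (fprod P (idm X) g))) ->
     (forall X Y (k : KHom M Y Y),
        comp (tau X Y) (fprod P (idm X) (star Y k))
        = star (prod P X Y) (comp (tau X Y) (fprod P (idm X) k))) ->
     @is_KleeneMonad C (@writer_triple C One P M tau Mo e mu)
       (@writer_join C One P M tau Mo e mu join)
       (@writer_bot C One P M tau Mo e mu bot)
       (@writer_star C One P M tau Mo e mu star)).
Proof.
  intros HK. split.
  - intros _ P E S. exact (state_kleene_monad E S HK).
  - intros One P tau Mo e mu Hst Hmo Hbot Hjoin Hstar.
    destruct HK as [HM KK].
    exact (writer_kleene_monad HM Hst Hmo KK Hbot Hjoin Hstar).
Qed.
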